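(* Let $n\ge1$ and suppose $d^\nabla_1=\nabla,d^\nabla_2,\dots,d^\nabla_n$ solve the equations $(A_k)$ for all $k\le n$. Then the equation $(A_{n+1})$ is compatible, i.e. $\big[\delta,\ \tfrac12\sum_{1\le k\le n}[d^\nabla_k,d^\nabla_{n+1-k}]\big]=0$.
   Context: $M$ smooth manifold, $\nabla$ torsion-free (Levi-Civita) connection on $T_M$. $C^*(\mathfrak h)=\Omega_M\otimes_{C^\infty_M}\Gamma(\widehat{\mathrm{Sym}}(T_M^\vee))$, locally with coordinates $x^i$, $y_i=\partial/\partial x^i$, dual frame $y^i$ (degree 0). $\delta=dx^i\partial/\partial y^i$; $d^\nabla_1=\nabla$ acts as the induced covariant derivative; for $k\ge2$, $d^\nabla_k$ is an $\Omega_M$-linear derivation with $d^\nabla_k(y^i)\in\Omega^1_M\otimes\Gamma(\mathrm{Sym}^kT_M^\vee)$; $[\cdot,\cdot]$ is the graded commutator of derivations. Equations: $(A_1)$: $-[\delta,d^\nabla_1]=0$; for $m\ge2$, $(A_m)$: $-[\delta,d^\nabla_m]=\frac12\sum_{1\le k\le m-1}[d^\nabla_k,d^\nabla_{m-k}]$. Equation $(A_m)$ is called compatible if its right-hand side graded-commutes with $\delta$. *)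

From HB Require Import structures.
From mathcomp Require Import all_boot all_order all_algebra.
Set Implicit Arguments. Unset Strict Implicit. Unset Printing Implicit Defensive.
Import GRing.Theory.
Local Open Scope ring_scope.

(* Graded commutator in an associative algebra of operators A (e.g. the
   algebra of K-linear endomorphisms of C^*(h), composition = product).
   p, q are the parities of a and b:  [a,b] = a b - (-1)^{|a||b|} b a. *)
Definition gcomm (K : fieldType) (A : lalgType K) (p q : bool) (a b : A) : A :=
  a * b - (-1) ^+ (p && q) * (b * a).

Definition rhsA (K : fieldType) (A : lalgType K) (d : nat -> A) (m : nat) : A :=
  (2%:R : K)^-1 *: \sum_(1 <= k < m) gcomm true true (d k) (d (m - k)%N).

Definition eqA (K : fieldType) (A : lalgType K) (delta : A) (d : nat -> A)
  (m : nat) : Prop :=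
  if m == 1%N then - gcomm true true delta (d 1%N) = 0
  else - gcomm true true delta (d m) = rhsA d m.

Definition compatibleA (K : fieldType) (A : lalgType K) (delta : A)
  (d : nat -> A) (m : nat) : Prop :=
  gcomm true false delta (rhsA d m) = 0.

(** With [P_m = \sum_(1 <= k < m) d_k d_(m-k)], the equations say
    [[delta, d_k] = - P_k] (and [rhsA d m = P_m] once [2] is invertible).
    For odd [delta, b, c] the even commutator obeys the graded Leibniz rule
    [[delta, b c] = [delta, b] c - b [delta, c]], so
    [[delta, P_(n+1)] = \sum_k (d_k P_(n+1-k) - P_k d_(n+1-k))].
    Since [P_m] is the coefficient of [t^m] in [D(t)^2] for
    [D(t) = \sum_(k >= 1) d_k t^k], the two sums are the coefficients of
    [t^(n+1)] in [D (D D)] and [(D D) D], hence equal by associativity. *)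
From mathcomp Require Import all_boot all_order all_algebra.
From mathcomp Require Import zify.
Import GRing.Theory.
Local Open Scope ring_scope.

Section TriangleExchange.

Variables (R : Type) (idx : R) (op : Monoid.com_law idx).

Lemma exchange_big_nat_triangle m n (F : nat -> nat -> R) :
  \big[op/idx]_(m <= i < n) \big[op/idx]_(m <= j < i) F i j =
  \big[op/idx]_(m <= j < n) \big[op/idx]_(j.+1 <= i < n) F i j.
Proof.
rewrite (@eq_big_nat _ _ _ _ _ _
  (fun i => \big[op/idx]_(m <= j < n | (j < i)%N) F i j)); last first.
  by move=> i /andP[_ /ltnW lein]; rewrite (big_nat_widen _ _ _ _ _ lein).
rewrite (exchange_big_dep_nat xpredT) //=.
apply: eq_big_nat => j /andP[lemj _].
by rewrite [RHS](@big_nat_widenl _ _ _ j.+1 m) // leqW.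
Qed.

End TriangleExchange.

Lemma sum_nat_sub_swap (V : nmodType) m (G : nat -> nat -> V) :
  \sum_(1 <= k < m) G k (m - k)%N = \sum_(1 <= k < m) G (m - k)%N k.
Proof.
rewrite big_nat_rev; apply: eq_big_nat => k /andP[_ ltkm].
by rewrite add1n subSS subKn // ltnW.
Qed.

Definition sqconv {R : pzSemiRingType} (d : nat -> R) (m : nat) : R :=
  \sum_(1 <= k < m) d k * d (m - k)%N.

Lemma sqconv1 (R : pzSemiRingType) (d : nat -> R) : sqconv d 1 = 0.
Proof. by rewrite /sqconv big_geq. Qed.

Lemma sqconv_assoc (R : pzSemiRingType) (d : nat -> R) m :
  \sum_(1 <= k < m) d k * sqconv d (m - k)%N =
  \sum_(1 <= k < m) sqconv d k * d (m - k)%N.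
Proof.
rewrite /sqconv; under [RHS]eq_bigr do rewrite mulr_suml.
rewrite exchange_big_nat_triangle; apply: eq_big_nat => a /andP[_ ltam].
rewrite mulr_sumr -(add1n a) big_addn; apply: eq_big_nat => b /andP[_ ltb].
by rewrite mulrA addnK addnC subnDA.
Qed.

Section GradedCommutator.

Variables (K : fieldType) (A : lalgType K).

Lemma gcomm_odd (a b : A) : gcomm true true a b = a * b + b * a.
Proof. by rewrite /gcomm expr1 mulN1r opprK. Qed.

Lemma gcomm_even (a b : A) : gcomm true false a b = a * b - b * a.
Proof. by rewrite /gcomm expr0 mul1r. Qed.

Lemma gcomm_sumr p q (a : A) (I : Type) (r : seq I) (F : I -> A) :
  gcomm p q a (\sum_(i <- r) F i) = \sum_(i <- r) gcomm p q a (F i).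
Proof. by rewrite /gcomm mulr_sumr mulr_suml mulr_sumr -sumrB. Qed.

Lemma gcommM_odd (x b c : A) :
  gcomm true false x (b * c) = gcomm true true x b * c - b * gcomm true true x c.
Proof.
rewrite gcomm_even !gcomm_odd mulrDl mulrDr !mulrA opprD addrA.
by rewrite addrK.
Qed.

Hypothesis two_neq0 : (2%:R : K) != 0.

Lemma rhsA_sqconv (d : nat -> A) m : rhsA d m = sqconv d m.
Proof.
rewrite /rhsA; under eq_bigr do rewrite gcomm_odd.
rewrite big_split /= -(@sum_nat_sub_swap _ m (fun i j => d i * d j)) -mulr2n.
by rewrite -scaler_nat scalerA mulVf // scale1r.
Qed.

Lemma eqA_gcomm (delta : A) (d : nat -> A) k :
  eqA delta d k -> gcomm true true delta (d k) = - sqconv d k.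
Proof.
rewrite /eqA; case: eqP => [->|_]; last by rewrite rhsA_sqconv => <-; rewrite opprK.
by rewrite sqconv1 oppr0 => /eqP; rewrite oppr_eq0 => /eqP.
Qed.

End GradedCommutator.

Theorem lemmaA1 (K : fieldType) (A : lalgType K) (h2 : (2%:R : K) != 0)
  (delta : A) (d : nat -> A) (n : nat) :
  (1 <= n)%N ->
  (forall k, (1 <= k <= n)%N -> eqA delta d k) ->
  compatibleA delta d n.+1.
Proof.
move=> _ hA.
have gcomm_d k : (1 <= k <= n)%N -> gcomm true true delta (d k) = - sqconv d k.
  by move=> hk; exact: eqA_gcomm (hA k hk).
rewrite /compatibleA rhsA_sqconv // gcomm_sumr.
under eq_big_nat => k /andP[k_ge1 k_le_n].
  rewrite gcommM_odd !gcomm_d ?k_ge1 //; last by lia.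
  rewrite mulNr mulrN opprK addrC.
over.
by rewrite sumrB sqconv_assoc subrr.
Qed.
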